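(* For every real $\alpha\in(0,1]$ there exists an infinite $\mathbb{N}^*\setminus Q$--free set $Q\subseteq\mathbb{N}^*$ with $\nu(Q)=\alpha$.
   Context: $\mathbb{N}^*$ denotes the set of positive integers. A set $Q\subseteq\mathbb{N}^*$ is called $\mathbb{N}^*\setminus Q$--free if for every $q\in\mathbb{N}^*$: $q\in Q$ if and only if no $v\in\mathbb{N}^*\setminus Q$ divides $q$. For an infinite set $Q\subseteq\mathbb{N}^*$, its exponent of convergence is $\nu(Q)=\inf\{\nu>0:\sum_{q\in Q}q^{-\nu}<\infty\}$. *)

From Stdlib Require Import Reals Arith.
Open Scope R_scope.

(* A set Q of positive integers is represented by a boolean predicate on nat;
   "Q ⊆ N*" is stated separately (Q 0 = false). *)
Definition subset_Nstar (Q : nat -> bool) : Prop :=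
  forall q : nat, Q q = true -> (0 < q)%nat.

Definition compl_free (Q : nat -> bool) : Prop :=
  forall q : nat, (0 < q)%nat ->
    (Q q = true <-> ~ (exists v : nat, (0 < v)%nat /\ Q v = false /\ Nat.divide v q)).

Definition infinite_set (Q : nat -> bool) : Prop :=
  forall N : nat, exists q : nat, (N < q)%nat /\ Q q = true.

Definition Q_term (Q : nat -> bool) (nu : R) (n : nat) : R :=
  if Q n then (if Nat.eqb n 0 then 0 else Rpower (INR n) (- nu)) else 0.

Definition Q_summable (Q : nat -> bool) (nu : R) : Prop :=
  exists l : R, infinite_sum (Q_term Q nu) l.

Definition exponent_of_convergence_is (Q : nat -> bool) (alpha : R) : Prop :=
  (forall nu : R, 0 < nu -> Q_summable Q nu -> alpha <= nu) /\
  (forall b : R, (forall nu : R, 0 < nu -> Q_summable Q nu -> b <= nu) -> b <= alpha).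

From Stdlib Require Import Reals Lra Lia Classical.
From mathcomp Require Import all_boot zify.

(* The set is Q = {1} ∪ P, where P is a set of primes chosen greedily: a prime
   p is kept iff (number of primes kept below p) + 1 <= p ^ alpha.  A set
   consisting of 1 and primes is (N* \ Q)-free, because the only divisors of
   a prime p are 1 and p.

   For nu > alpha the series converges: the k-th kept prime p_k satisfies
   k <= p_k ^ alpha, so the series is dominated by the p-series with exponent
   nu / alpha > 1.  For nu < alpha it diverges: otherwise at most O(p ^ nu)
   primes below p are kept, hence every large prime passes the test and is
   kept, and the series dominates the sum of the reciprocals of the large
   primes, which diverges (Erdős' counting argument with smooth numbers).
   So nu(Q) = alpha, and Q is infinite because its series diverges. *)

Definition smooth (T n : nat) : bool := all (fun p => p <= T)%N (primes n).

Lemma count_smooth_split (N T : nat) :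
  N = (\sum_(1 <= i < N.+1) smooth T i + \sum_(1 <= i < N.+1) ~~ smooth T i)%N.
Proof.
rewrite -big_split /=.
transitivity (\sum_(1 <= i < N.+1) 1)%N; first by rewrite sum_nat_const_nat; lia.
by apply: eq_bigr => i _; case: (smooth T i).
Qed.

(* A non-T-smooth i <= N has a prime factor p > T, and such a p divides
   exactly N %/ p of the numbers 1, ..., N. *)
Lemma nonsmooth_count_le (N T : nat) :
  (\sum_(1 <= i < N.+1) ~~ smooth T i <=
   \sum_(p < N.+1 | prime p && (T < p)%N) N %/ p)%N.
Proof.
rewrite (eq_bigr (fun p : 'I_N.+1 => \sum_(1 <= i < N.+1) (p %| i))%N); last first.
  by move=> p _; rewrite divn_count_dvd.
rewrite exchange_big /= big_nat_cond [X in (_ <= X)%N]big_nat_cond.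
apply: leq_sum => i /andP [/andP [i_gt0 i_leN] _].
case si: (smooth T i) => //=.
move: si => /negbT /allPn [p p_primes T_lt_p].
move: p_primes; rewrite mem_primes => /and3P [p_prime _ p_dvd_i].
have p_ltN : (p < N.+1)%N by have := dvdn_leq i_gt0 p_dvd_i; lia.
rewrite (bigD1 (Ordinal p_ltN)) /=; last by rewrite p_prime ltnNge.
by rewrite p_dvd_i.
Qed.

Lemma logn_le_pow2 (p i k : nat) : (0 < i)%N -> (i <= 2 ^ k)%N -> (logn p i <= k)%N.
Proof.
move=> i_gt0 i_le.
case: (boolP (prime p)) => p_prime; last by rewrite lognE (negbTE p_prime).
have p_le_i := dvdn_leq i_gt0 (pfactor_dvdnn p i).
have two_le : (2 ^ logn p i <= p ^ logn p i)%N.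
  by elim: (logn p i) => // e IH; rewrite !expnS leq_mul // prime_gt1.
rewrite -(@leq_exp2l 2) //; lia.
Qed.

(* A T-smooth number in 1, ..., 2 ^ k is determined by its exponents at the
   primes p <= T, each of which is at most k. *)
Lemma smooth_count_le (k T : nat) :
  (\sum_(1 <= i < (2 ^ k).+1) smooth T i <= k.+1 ^ T.+1)%N.
Proof.
set N := (2 ^ k)%N.
have -> : (\sum_(1 <= i < N.+1) smooth T i =
           \sum_(i < N.+1 | (0 < i)%N && smooth T i) 1)%N.
  rewrite -(big_mkord (fun i => (0 < i)%N && smooth T i) (fun=> 1%N)).
  rewrite [RHS]big_mkcond [RHS]big_ltn //= add0n.
  by apply: eq_big_nat => i /andP [i_gt0 _]; rewrite i_gt0; case: (smooth T i).
rewrite sum1dep_card.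
have -> : (k.+1 ^ T.+1 = #|{ffun 'I_T.+1 -> 'I_k.+1}|)%N by rewrite card_ffun !card_ord.
pose exps := fun i : 'I_N.+1 => [ffun p : 'I_T.+1 => (inord (logn p i) : 'I_k.+1)].
apply: (@leq_card_in _ _ exps) => i j; rewrite !inE => /andP [i_gt0 si] /andP [j_gt0 sj] eq_exps.
apply: val_inj; apply: eqn_from_log => // p.
case: (leqP p T) => [p_leT | T_ltp].
  have := congr1 (fun g : {ffun 'I_T.+1 -> 'I_k.+1} => val (g (Ordinal (p_leT : (p < T.+1)%N)))) eq_exps.
  by rewrite /exps !ffunE /= !inordK // ltnS logn_le_pow2 // -ltnS ltn_ord.
have logn0 m : smooth T m -> logn p m = 0%N.
  move=> sm; apply/eqP; rewrite -leqn0 leqNgt logn_gt0; apply/negP => p_primes.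
  by have := allP sm p p_primes; lia.
by rewrite !logn0.
Qed.

Lemma sq_le_pow2 (j : nat) : (4 <= j)%N -> (j * j <= 2 ^ j)%N.
Proof.
elim: j => // j IH j_ge.
case: (ltngtP j 3) => [j_lt3 | j_gt3 | ->] //; first lia.
by have := IH j_gt3; rewrite expnS; nia.
Qed.

(* Erdős' counting argument: for N = 2 ^ k with k large, at most N / 2 of
   the numbers 1, ..., N are T-smooth, so the non-smooth ones, counted by
   the sum of N %/ p over primes T < p <= N, number at least N / 2. *)
Lemma erdos_count (T : nat) : exists N : nat,
  (T <= N)%N /\ (0 < N)%N /\
  (N <= 2 * \sum_(p < N.+1 | prime p && (T < p)%N) N %/ p)%N.
Proof.
set j := (T + 4)%N.
set k := (2 ^ j).-1.
have k_succ : k.+1 = (2 ^ j)%N by rewrite /k prednK // expn_gt0.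
have T_lt_k : (T < k)%N by have := ltn_expl j (isT : (1 < 2)%N); rewrite /k /j; lia.
exists (2 ^ k)%N; split; first by have := ltn_expl k (isT : (1 < 2)%N); lia.
split; first by rewrite expn_gt0.
have few_smooth : (2 * k.+1 ^ T.+1 <= 2 ^ k)%N.
  rewrite k_succ -expnM -expnS leq_exp2l //.
  by have := sq_le_pow2 j (leq_addl T 4); rewrite /k /j; nia.
have := count_smooth_split (2 ^ k) T.
have := smooth_count_le k T.
have := nonsmooth_count_le (2 ^ k) T.
lia.
Qed.

Open Scope R_scope.

Definition prime_recip (lo m : nat) : R :=
  if prime m && (lo <= m)%N then / INR m else 0.

Lemma prime_recip_ge0 (lo m : nat) : 0 <= prime_recip lo m.
Proof.
rewrite /prime_recip; case: ifP => [/andP [m_prime _] | _]; last lra.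
by apply/Rlt_le/Rinv_0_lt_compat/lt_0_INR/ltP/prime_gt0.
Qed.

Lemma INR_big_cond (n : nat) (P : pred nat) (g : nat -> nat) :
  INR (\sum_(p < n.+1 | P p) g p)%N =
  sum_f_R0 (fun p => if P p then INR (g p) else 0) n.
Proof.
rewrite big_mkcond; elim: n => [|n IH]; first by rewrite big_ord_recr big_ord0 /=; case: (P 0%N).
by rewrite big_ord_recr /= plus_INR -IH; case: (P n.+1).
Qed.

Lemma prime_recip_block (T : nat) :
  exists N : nat, (T <= N)%N /\ 1 / 2 <= sum_f_R0 (prime_recip T.+1) N.
Proof.
have [N [T_leN [N_gt0 N_le]]] := erdos_count T.
exists N; split => //.
set P := fun p => prime p && (T < p)%N.
have N_le_R : INR N <= 2 * sum_f_R0 (fun p => if P p then INR (N %/ p) else 0) N.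
  rewrite -INR_big_cond -[2]/(INR 2) -mult_INR; exact/le_INR/leP.
have quot_le : sum_f_R0 (fun p => if P p then INR (N %/ p) else 0) N <=
               INR N * sum_f_R0 (prime_recip T.+1) N.
  rewrite scal_sum; apply: sum_Rle => p _; rewrite /prime_recip -/(P p).
  case Pp: (P p); last lra.
  have p_pos : 0 < INR p by apply/lt_0_INR/ltP; case/andP: Pp => /prime_gt0.
  have quot_mul : INR (N %/ p) * INR p <= INR N.
    by rewrite -mult_INR; exact/le_INR/leP/leq_divM.
  apply: (Rmult_le_reg_r (INR p)) => //.
  by have -> : / INR p * INR N * INR p = INR N by field; lra.
have N_pos : 0 < INR N by exact/lt_0_INR/ltP.
nra.
Qed.

Lemma sum_f_R0_split (f : nat -> R) (T N : nat) : (T <= N)%N ->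
  sum_f_R0 f N = sum_f_R0 f T + sum_f_R0 (fun m => if (T < m)%N then f m else 0) N.
Proof.
move=> /leP; elim=> [|M T_leM IH] /=.
  2: by rewrite IH (_ : (T < M.+1)%N = true); [lra | apply/ltP; lia].
suff head0 n : (n <= T)%N -> sum_f_R0 (fun m => if (T < m)%N then f m else 0) n = 0.
  by rewrite head0 //; lra.
elim: n => [|n IH] n_le //=.
by rewrite IH ?(ltnW n_le) // ltnNge n_le /=; lra.
Qed.

Lemma prime_recip_unbounded (lo : nat) (B : R) :
  exists n : nat, B < sum_f_R0 (prime_recip lo) n.
Proof.
have blocks (k : nat) : exists n, (lo <= n)%N /\ INR k / 2 <= sum_f_R0 (prime_recip lo) n.
  elim: k => [|k [n [lo_le_n IH]]].
    exists lo; split => //; have := cond_pos_sum _ lo (prime_recip_ge0 lo); simpl; lra.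
  have [N [n_leN block]] := prime_recip_block n.
  exists N; split; first exact: leq_trans n_leN.
  rewrite (sum_f_R0_split _ _ _ n_leN) S_INR.
  suff -> : sum_f_R0 (fun m => if (n < m)%N then prime_recip lo m else 0) N =
            sum_f_R0 (prime_recip n.+1) N by lra.
  apply: PartSum.sum_eq => m _; rewrite /prime_recip.
  case: (ltnP n m) => [n_lt_m | _]; last by rewrite andbF.
  by rewrite (leq_trans lo_le_n (ltnW n_lt_m)).
have [k k_gt] := INR_unbounded (2 * B).
have [n [_ nk]] := blocks k.
by exists n; lra.
Qed.

Lemma Rpower_pos (x y : R) : 0 < Rpower x y.
Proof. exact: exp_pos. Qed.

Lemma Rpower_1l (y : R) : Rpower 1 y = 1.
Proof. by rewrite /Rpower ln_1 Rmult_0_r exp_0. Qed.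

Lemma Rpower_opp_antitone (x y c : R) :
  0 < x -> x <= y -> 0 <= c -> Rpower y (- c) <= Rpower x (- c).
Proof.
move=> x_pos x_le_y c_ge0; rewrite !Rpower_Ropp.
apply: Rinv_le_contravar; first exact: Rpower_pos.
by apply: Rle_Rpower_l => //; lra.
Qed.

(* Mean-value bound for x |-> x ^ (- t): the decrement over [x, x + 1]
   dominates t (x + 1) ^ (- 1 - t).  It follows from ln(1 + 1/x) >= 1/(x + 1)
   and exp u >= 1 + u. *)
Lemma Rpower_opp_decrement (x t : R) : 1 <= x -> 0 < t ->
  t * Rpower (x + 1) (- (1 + t)) <= Rpower x (- t) - Rpower (x + 1) (- t).
Proof.
move=> x_ge1 t_pos; rewrite /Rpower.
have x_pos : 0 < x by lra.
have x1_pos : 0 < x + 1 by lra.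
set L1 := ln x; set L2 := ln (x + 1).
have ln_gap : / (x + 1) <= L2 - L1.
  have ratio_pos : 0 < x * / (x + 1) by apply: Rmult_lt_0_compat => //; exact: Rinv_0_lt_compat.
  have := exp_ineq1_le (ln (x * / (x + 1))).
  rewrite exp_ln // ln_mult // ?ln_Rinv //; last exact: Rinv_0_lt_compat.
  have -> : x * / (x + 1) = 1 - / (x + 1) by field; lra.
  rewrite /L1 /L2; lra.
have split_exp : exp (- (1 + t) * L2) = exp (- t * L2) * / (x + 1).
  by rewrite -(exp_ln (x + 1)) // -exp_Ropp -exp_plus /L2; f_equal; ring.
have shift_exp : exp (- t * L1) = exp (- t * L2) * exp (t * (L2 - L1)).
  by rewrite -exp_plus; f_equal; ring.
rewrite split_exp shift_exp.
have exp_ge := exp_ineq1_le (t * (L2 - L1)).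
have t_gap : t * / (x + 1) <= t * (L2 - L1) by apply: Rmult_le_compat_l; lra.
have : exp (- t * L2) * (t * / (x + 1)) <= exp (- t * L2) * (exp (t * (L2 - L1)) - 1).
  by apply: Rmult_le_compat_l; [exact/Rlt_le/exp_pos | lra].
lra.
Qed.

Fixpoint pseries (s : R) (K : nat) : R :=
  match K with O => 0 | S K' => pseries s K' + Rpower (INR (S K')) (- s) end.

Lemma pseriesS (s : R) (K : nat) : pseries s K.+1 = pseries s K + Rpower (INR K.+1) (- s).
Proof. by []. Qed.

(* Telescoping the decrement bound: the p-series with exponent 1 + t > 1
   stays below 1 + 1 / t. *)
Lemma pseries_le (t : R) (K : nat) : 0 < t -> pseries (1 + t) K <= 1 + / t.
Proof.
move=> t_pos; have tinv_pos : 0 < / t by exact: Rinv_0_lt_compat.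
suff telescope n : pseries (1 + t) (S n) <= 1 + / t - / t * Rpower (INR (S n)) (- t).
  case: K => [|K]; first by rewrite /=; lra.
  have := telescope K.
  have := Rmult_lt_0_compat _ _ tinv_pos (Rpower_pos (INR (S K)) (- t)); lra.
elim: n => [|n IH]; first by rewrite /= !Rpower_1l; lra.
have n1_ge1 : 1 <= INR (S n) by rewrite S_INR; have := pos_INR n; lra.
have := Rpower_opp_decrement _ _ n1_ge1 t_pos; rewrite -S_INR => decr.
rewrite pseriesS.
suff : Rpower (INR (S (S n))) (- (1 + t)) <=
       / t * Rpower (INR (S n)) (- t) - / t * Rpower (INR (S (S n))) (- t) by lra.
apply: (Rmult_le_reg_l t) => //.
by rewrite Rmult_minus_distr_l -!Rmult_assoc Rinv_r; lra.
Qed.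

Lemma Q_term_ge0 (Q : nat -> bool) (nu : R) (m : nat) : 0 <= Q_term Q nu m.
Proof.
rewrite /Q_term; case: (Q m); last lra.
by case: (Nat.eqb m 0); [lra | exact/Rlt_le/Rpower_pos].
Qed.

Lemma Q_summable_bounded (Q : nat -> bool) (nu B : R) :
  (forall n, sum_f_R0 (Q_term Q nu) n <= B) -> Q_summable Q nu.
Proof.
move=> bounded.
have growing : Un_growing (sum_f_R0 (Q_term Q nu)).
  by move=> n /=; have := Q_term_ge0 Q nu (S n); lra.
have ub : has_ub (sum_f_R0 (Q_term Q nu)) by exists B => _ [n ->]; exact: bounded.
by have [l cv] := growing_cv _ growing ub; exists l.
Qed.

Lemma Q_summable_partial_le (Q : nat -> bool) (nu l : R) :
  infinite_sum (Q_term Q nu) l -> forall n, sum_f_R0 (Q_term Q nu) n <= l.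
Proof. by move=> cv n; apply: sum_incr cv _; exact: Q_term_ge0. Qed.

Lemma infinite_of_not_summable (Q : nat -> bool) (nu : R) :
  ~ Q_summable Q nu -> infinite_set Q.
Proof.
move=> not_summable N; apply: NNPP => no_large; apply: not_summable.
have tail0 q : (N < q)%coq_nat -> Q_term Q nu q = 0.
  by move=> N_lt_q; rewrite /Q_term; case Qq: (Q q) => //; case: no_large; exists q.
have const d : sum_f_R0 (Q_term Q nu) (N + d) = sum_f_R0 (Q_term Q nu) N.
  by elim: d => [|d IH]; rewrite ?addn0 // addnS /= IH tail0; [lra | lia].
exists (sum_f_R0 (Q_term Q nu) N) => eps eps_pos; exists N => n /leP N_le_n.
by rewrite -(subnKC N_le_n) const Rdist_eq; lra.
Qed.

Lemma exponent_of_convergence_threshold (Q : nat -> bool) (a : R) : 0 < a ->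
  (forall nu, a < nu -> Q_summable Q nu) ->
  (forall nu, 0 < nu -> nu < a -> ~ Q_summable Q nu) ->
  exponent_of_convergence_is Q a.
Proof.
move=> a_pos above below; split.
- move=> nu nu_pos summable; case: (Rle_or_lt a nu) => // nu_lt_a.
  by case: (below nu nu_pos nu_lt_a summable).
- move=> b lower; case: (Rle_or_lt b a) => // a_lt_b.
  have mid_pos : 0 < (a + b) / 2 by lra.
  by have := lower _ mid_pos (above ((a + b) / 2) ltac:(lra)); lra.
Qed.

Lemma compl_free_of_primes (Q : nat -> bool) :
  Q 1%N -> (forall q, Q q -> q = 1%N \/ prime q) -> compl_free Q.
Proof.
move=> Q1 Q_primes q q_pos; split.
- move=> Qq [v [v_pos [Qv [z q_eq]]]].
  have v_dvd : (v %| q)%N by apply/dvdnP; exists z.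
  case: (Q_primes q Qq) => [q1 | /primeP [_ divisors]].
    by move: v_dvd Qv; rewrite q1 dvdn1 => /eqP ->; rewrite Q1.
  by case/orP: (divisors v v_dvd) => /eqP v_eq; move: Qv; rewrite v_eq ?Q1 ?Qq.
- move=> no_divisor; case Qq: (Q q) => //; case: no_divisor.
  by exists q; split => //; split => //; exact: Nat.divide_refl.
Qed.

Lemma subset_Nstar_of_primes (Q : nat -> bool) :
  (forall q, Q q -> q = 1%N \/ prime q) -> subset_Nstar Q.
Proof. by move=> Q_primes q /Q_primes [-> | /prime_gt0 /ltP]. Qed.

Definition Rleb (x y : R) : bool := if Rle_dec x y then true else false.

Lemma RlebP (x y : R) : Rleb x y = true <-> x <= y.
Proof. by rewrite /Rleb; case: (Rle_dec x y). Qed.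

Section GreedyPrimes.
Variable a : R.

(* nkept n is the number of primes below n kept by the greedy rule: a prime
   m is kept iff, counting it, at most m ^ a primes have been kept so far. *)
Fixpoint nkept (n : nat) : nat :=
  match n with
  | O => O
  | S m => (nkept m + (if prime m && Rleb (INR (nkept m) + 1) (Rpower (INR m) a)
                      then 1 else 0))%N
  end.

Definition kept (m : nat) : bool := prime m && Rleb (INR (nkept m) + 1) (Rpower (INR m) a).

Lemma nkeptS (m : nat) : nkept (S m) = (nkept m + (if kept m then 1 else 0))%N.
Proof. by []. Qed.

Lemma kept_prime (m : nat) : kept m -> prime m.
Proof. by case/andP. Qed.

Lemma kept_bound (m : nat) : kept m -> INR (nkept m) + 1 <= Rpower (INR m) a.
Proof. by case/andP => _ /RlebP. Qed.

Definition Qa (n : nat) : bool := (n == 1)%N || kept n.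

Lemma Qa_primes (q : nat) : Qa q -> q = 1%N \/ prime q.
Proof. by case/orP => [/eqP | /kept_prime]; [left | right]. Qed.

Definition kept_term (nu : R) (m : nat) : R := if kept m then Rpower (INR m) (- nu) else 0.

Lemma kept_term_ge0 (nu : R) (m : nat) : 0 <= kept_term nu m.
Proof. by rewrite /kept_term; case: (kept m); [exact/Rlt_le/Rpower_pos | lra]. Qed.

Lemma Qa_term_split (nu : R) (m : nat) :
  Q_term Qa nu m = (if (m == 1)%N then 1 else 0) + kept_term nu m.
Proof.
rewrite /Q_term /Qa /kept_term.
case: (eqVneq m 1%N) => [-> | m_neq1] /=; first by rewrite Rpower_1l; lra.
case km: (kept m); last lra.
have /prime_gt0 m_pos := kept_prime m km.
have -> : Nat.eqb m 0 = false by apply/Nat.eqb_neq; lia.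
lra.
Qed.

Lemma Qa_partial_split (nu : R) (n : nat) :
  sum_f_R0 (Q_term Qa nu) n = (if n == 0%N then 0 else 1) + sum_f_R0 (kept_term nu) n.
Proof.
elim: n => [|n IH]; first by rewrite /= Qa_term_split.
rewrite [LHS]/= IH Qa_term_split /=.
by case: n {IH} => [|n] /=; lra.
Qed.

(* Since the k-th kept prime p has p ^ (- nu) <= k ^ (- nu / a), the series
   of the kept primes is dominated by a p-series with exponent nu / a. *)
Lemma kept_partial_le_pseries (nu : R) (n : nat) : 0 < a -> 0 <= nu ->
  sum_f_R0 (kept_term nu) n <= pseries (nu / a) (nkept n.+1).
Proof.
move=> a_pos nu_ge0; elim: n => [|n IH]; first by rewrite /kept_term /= ; lra.
rewrite /kept_term in IH *; rewrite tech5 nkeptS.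
case km: (kept n.+1); last by rewrite addn0; lra.
rewrite addn1 pseriesS.
suff : Rpower (INR n.+1) (- nu) <= Rpower (INR (nkept n.+1).+1) (- (nu / a)) by lra.
have count_pos : 0 < INR (nkept n.+1).+1 by apply/lt_0_INR; lia.
have count_le : INR (nkept n.+1).+1 <= Rpower (INR n.+1) a by rewrite S_INR; exact: kept_bound.
have exp_ge0 : 0 <= nu / a by apply: Rmult_le_pos; [| apply/Rlt_le/Rinv_0_lt_compat].
have := Rpower_opp_antitone _ _ _ count_pos count_le exp_ge0.
by rewrite Rpower_mult (_ : a * - (nu / a) = - nu) //; field; lra.
Qed.

(* Convergence above a: partial sums are at most 1 + (1 + 1 / t) for
   nu / a = 1 + t. *)
Lemma Qa_summable_above (nu : R) : 0 < a -> a < nu -> Q_summable Qa nu.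
Proof.
move=> a_pos a_lt_nu; set t := nu / a - 1.
have t_pos : 0 < t.
  suff : 1 < nu / a by rewrite /t; lra.
  by apply: (Rmult_lt_reg_r a) => //; rewrite Rmult_1_l /Rdiv Rmult_assoc Rinv_l; lra.
apply: (Q_summable_bounded _ _ (2 + / t)) => n.
rewrite Qa_partial_split.
have := kept_partial_le_pseries nu n a_pos ltac:(lra).
have := pseries_le t (nkept n.+1) t_pos; rewrite (_ : 1 + t = nu / a); last by rewrite /t; ring.
by case: (n == 0%N); lra.
Qed.

(* If the series of the kept primes has partial sums bounded by l, then at
   most l p ^ nu primes below p are kept, as each contributes >= p ^ (- nu). *)
Lemma nkept_le_of_bounded (nu l : R) : 0 <= nu ->
  (forall n, sum_f_R0 (kept_term nu) n <= l) ->
  forall p, (0 < p)%N -> INR (nkept p) <= l * Rpower (INR p) nu.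
Proof.
move=> nu_ge0 bounded p p_pos.
have count_le n x : INR n <= x -> 0 < x ->
    INR (nkept n.+1) * Rpower x (- nu) <= sum_f_R0 (kept_term nu) n.
  elim: n => [|n IH] n_le_x x_pos; first by rewrite /kept_term /=; lra.
  have := IH ltac:(rewrite S_INR in n_le_x; lra) x_pos.
  rewrite (nkeptS n.+1) tech5 /kept_term; case km: (kept n.+1); last by rewrite addn0; lra.
  rewrite addn1 S_INR.
  have : Rpower x (- nu) <= Rpower (INR n.+1) (- nu).
    by apply: Rpower_opp_antitone => //; apply/lt_0_INR; lia.
  lra.
have p_R : 0 < INR p by exact/lt_0_INR/ltP.
have pow_pos := Rpower_pos (INR p) nu.
have := count_le p.-1 (INR p); rewrite prednK // Rpower_Ropp.
move=> /(_ ltac:(apply/le_INR; lia) p_R) le_sum.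
have le_l := bounded p.-1.
apply: (Rmult_le_reg_r (/ Rpower (INR p) nu)); first exact: Rinv_0_lt_compat.
by rewrite Rmult_assoc Rinv_r; lra.
Qed.

Lemma large_primes_kept (nu l : R) : 0 <= nu -> nu < a -> 0 <= l ->
  (forall p, (0 < p)%N -> INR (nkept p) <= l * Rpower (INR p) nu) ->
  exists N0 : nat, forall p, prime p -> (N0 <= p)%N -> kept p.
Proof.
move=> nu_ge0 nu_lt_a l_ge0 count_le.
set X0 := Rpower (l + 1) (/ (a - nu)).
have [N1 N1_gt] := INR_unbounded X0.
exists N1.+1 => p p_prime N1_lt_p.
rewrite /kept p_prime; apply/RlebP.
have p_ge1 : 1 <= INR p by apply: (le_INR 1); lia.
have N1_le_p : INR N1 <= INR p by apply: le_INR; lia.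
have X0_le_p : X0 <= INR p by lra.
have pow_nu_ge1 : 1 <= Rpower (INR p) nu.
  by rewrite -(Rpower_O (INR p)); [apply: Rle_Rpower | lra].
have growth : l + 1 <= Rpower (INR p) (a - nu).
  have -> : l + 1 = Rpower X0 (a - nu).
    by rewrite /X0 Rpower_mult Rinv_l ?Rpower_1; lra.
  by apply: Rle_Rpower_l; [lra | split => //; exact: Rpower_pos].
have -> : Rpower (INR p) a = Rpower (INR p) (a - nu) * Rpower (INR p) nu.
  by rewrite -Rpower_plus; f_equal; ring.
have := count_le p ltac:(exact: prime_gt0).
have : (l + 1) * Rpower (INR p) nu <= Rpower (INR p) (a - nu) * Rpower (INR p) nu.
  by apply: Rmult_le_compat_r; [lra |].
nra.
Qed.

(* Divergence below a: otherwise all large primes would be kept, and the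
   series would dominate the divergent sum of the reciprocals of primes. *)
Lemma Qa_not_summable_below (nu : R) : 0 < nu -> nu < a -> a <= 1 -> ~ Q_summable Qa nu.
Proof.
move=> nu_pos nu_lt_a a_le1 [l cv].
have kept_bounded n : sum_f_R0 (kept_term nu) n <= l.
  apply: Rle_trans (Q_summable_partial_le _ _ _ cv n).
  by rewrite Qa_partial_split; case: (n == 0%N); lra.
have l_ge0 : 0 <= l by have := kept_bounded 0%N; have := kept_term_ge0 nu 0; simpl; lra.
have [N0 large_kept] := large_primes_kept nu l ltac:(lra) nu_lt_a l_ge0
  (nkept_le_of_bounded nu l ltac:(lra) kept_bounded).
have [n n_gt] := prime_recip_unbounded N0 l.
suff : sum_f_R0 (prime_recip N0) n <= sum_f_R0 (kept_term nu) n by have := kept_bounded n; lra.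
apply: sum_Rle => m _; rewrite /prime_recip; case: ifP => [/andP [m_prime N0_le_m] | _].
  2: exact: kept_term_ge0.
have m_ge1 : 1 <= INR m by apply: (le_INR 1); have := prime_gt0 m_prime; lia.
rewrite /kept_term large_kept // Rpower_Ropp; apply: Rinv_le_contravar; first exact: Rpower_pos.
by rewrite -{2}(Rpower_1 (INR m)); [apply: Rle_Rpower; lra | lra].
Qed.

End GreedyPrimes.

Theorem mainTheorem7 (alpha : R) (Halpha : 0 < alpha <= 1) :
  exists Q : nat -> bool,
    subset_Nstar Q /\ infinite_set Q /\ compl_free Q /\
    exponent_of_convergence_is Q alpha.
Proof.
case: Halpha => alpha_pos alpha_le1.
have below nu : 0 < nu -> nu < alpha -> ~ Q_summable (Qa alpha) nu.
  by move=> nu_pos nu_lt; exact: Qa_not_summable_below.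
exists (Qa alpha); split; first exact/subset_Nstar_of_primes/Qa_primes.
split; first by apply: (infinite_of_not_summable _ (alpha / 2)); apply: below; lra.
split; first by apply: compl_free_of_primes; [| exact: Qa_primes].
by apply: exponent_of_convergence_threshold => // nu; exact: Qa_summable_above.
Qed.
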